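(* Let $\dot G$ be a connected, non-complete, $5$-regular and $3$ net-regular SRSG belonging to $\mathcal C_1\cup\mathcal C_4\cup\mathcal C_5$. If $\dot G$ contains an unbalanced triangle (a triangle whose product of edge signs is $-1$), then $\dot G$ is isomorphic either to $\dot S^1_8$, an SRSG with parameters $(8,5,-2,4,4)$, or to $\dot S^1_{10}$, an SRSG with parameters $(10,5,-2,4,2)$.
   Context: A signed graph $\dot G=(G,\sigma)$ is a simple graph $G$ with a sign function $\sigma:E(G)\to\{+1,-1\}$; adjacency matrix $A_{\dot G}$ has entries $\sigma(v_iv_j)$ for adjacent $v_i,v_j$ and $0$ otherwise. Connectedness and degree refer to $G$; $d^\pm(v)$ are the numbers of positive/negative edges at $v$; net-degree is $d^+(v)-d^-(v)$; $\rho$ net-regular means all net-degrees equal $\rho$. Homogeneous means all edges have the same sign. $\dot G$ on $n$ vertices is an SRSG if it is neither homogeneous complete nor edgeless and there exist $r\in\mathbb N$, $a,b,c\in\mathbb Z$ with $(A_{\dot G}^2)_{ii}=r$, $(A_{\dot G}^2)_{ij}=a$ for positive edges $v_iv_j$, $=b$ for negative edges, $=c$ for distinct non-adjacent $v_i,v_j$; parameters $(n,r,a,b,c)$ (non-complete) or $(n,r,a,b)$ (complete). Inhomogeneous SRSGs are split into classes: $\mathcal C_1$: $a=-b$ and either complete, or non-complete with $c\neq0$; $\mathcal C_2$: $a=-b$, non-complete, $c=0$; $\mathcal C_3$: $a\ne -b$ and either complete or non-complete with $c=\frac{a+b}{2}$; $\mathcal C_4$: $a\neq-b$, non-complete, $c=0$;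 $\mathcal C_5$: $a\ne-b$, non-complete, $c\ne\frac{a+b}2$, $c\neq 0$. For $m\in\{4,5\}$, $\dot S^1_{2m}$ has vertex set $\{x_t,y_t:t\in\mathbb Z_m\}$, negative edges $x_ty_t$ ($t\in\mathbb Z_m$), positive edges all four edges between $\{x_t,y_t\}$ and $\{x_{t+1},y_{t+1}\}$ for each $t$, and no other edges. *)

From mathcomp Require Import all_boot all_order all_algebra.
Set Implicit Arguments. Unset Strict Implicit. Unset Printing Implicit Defensive.
Import Order.TTheory GRing.Theory Num.Theory.
Local Open Scope ring_scope.

(* A signed graph on a finite vertex type T is given by its adjacency
   function A : T -> T -> int (the signed adjacency matrix):
   A x y = sigma(xy) in {+1,-1} if xy is an edge, 0 otherwise;
   simple graph: symmetric, loopless. *)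
Definition signed_graph (T : finType) (A : T -> T -> int) : Prop :=
  (forall x, A x x = 0) /\ (forall x y, A x y = A y x) /\
  (forall x y, A x y = 0 \/ A x y = 1 \/ A x y = -1).

Definition adjacent (T : finType) (A : T -> T -> int) (x y : T) : bool :=
  A x y != 0.

Definition sq (T : finType) (A : T -> T -> int) (x y : T) : int :=
  \sum_(z : T) A x z * A z y.

Definition deg (T : finType) (A : T -> T -> int) (x : T) : nat :=
  #|[set y | A x y != 0]|.
Definition dplus (T : finType) (A : T -> T -> int) (x : T) : nat :=
  #|[set y | A x y == 1]|.
Definition dminus (T : finType) (A : T -> T -> int) (x : T) : nat :=
  #|[set y | A x y == -1]|.
Definition net_deg (T : finType) (A : T -> T -> int) (x : T) : int :=
  (dplus A x)%:Z - (dminus A x)%:Z.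

Definition regular (T : finType) (A : T -> T -> int) (k : nat) : Prop :=
  forall x, deg A x = k.
Definition net_regular (T : finType) (A : T -> T -> int) (rho : int) : Prop :=
  forall x, net_deg A x = rho.

Definition connected (T : finType) (A : T -> T -> int) : Prop :=
  forall x y, connect (adjacent A) x y.

Definition complete (T : finType) (A : T -> T -> int) : Prop :=
  forall x y, x != y -> A x y != 0.
Definition edgeless (T : finType) (A : T -> T -> int) : Prop :=
  forall x y, A x y = 0.
Definition homogeneous (T : finType) (A : T -> T -> int) : Prop :=
  (forall x y, A x y != -1) \/ (forall x y, A x y != 1).

Definition srsg_cond (T : finType) (A : T -> T -> int)
    (r : nat) (a b c : int) : Prop :=
  (forall x, sq A x x = r%:Z) /\
  (forall x y, A x y = 1 -> sq A x y = a) /\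
  (forall x y, A x y = -1 -> sq A x y = b) /\
  (forall x y, x != y -> A x y = 0 -> sq A x y = c).

Definition SRSG (T : finType) (A : T -> T -> int) : Prop :=
  ~ (homogeneous A /\ complete A) /\ ~ edgeless A /\
  exists r a b c, srsg_cond A r a b c.

Definition SRSG_params (T : finType) (A : T -> T -> int)
    (n r : nat) (a b c : int) : Prop :=
  SRSG A /\ #|T| = n /\ ~ complete A /\ srsg_cond A r a b c.

(* Membership in C1 ∪ C4 ∪ C5 for a non-complete inhomogeneous SRSG with
   parameters (r,a,b,c) (for non-complete ones these classes read):
   C1: a = -b, c <> 0;  C4: a <> -b, c = 0;
   C5: a <> -b, c <> (a+b)/2, c <> 0. *)
Definition in_C1 (a b c : int) : Prop := a = - b /\ c != 0.
Definition in_C4 (a b c : int) : Prop := a != - b /\ c = 0.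
Definition in_C5 (a b c : int) : Prop :=
  a != - b /\ 2 * c != a + b /\ c != 0.

Definition inhomogeneous (T : finType) (A : T -> T -> int) : Prop :=
  ~ homogeneous A.

Definition has_unbalanced_triangle (T : finType) (A : T -> T -> int) : Prop :=
  exists x y z : T, [/\ x != y, y != z & x != z] /\
    [/\ A x y != 0, A y z != 0, A x z != 0 & A x y * A y z * A z x = -1].

Definition sg_iso (T T' : finType) (A : T -> T -> int) (B : T' -> T' -> int)
  : Prop :=
  exists f : T -> T', bijective f /\ forall x y, B (f x) (f y) = A x y.

(* The signed graph S^1_{2m}: vertices x_t = (t,false), y_t = (t,true),
   t in Z_m; negative edges x_t y_t; positive edges between {x_t,y_t} and
   {x_{t+1},y_{t+1}}. *)
Definition S1 (m : nat) (u v : 'I_m * bool) : int :=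
  if u.1 == v.1 then (if u.2 != v.2 then -1 else 0)
  else if ((u.1).+1 %% m == v.1)%N || ((v.1).+1 %% m == u.1)%N then 1
  else 0.

From mathcomp Require Import all_boot all_order all_algebra.
From mathcomp Require Import ring zify.
Set Implicit Arguments. Unset Strict Implicit. Unset Printing Implicit Defensive.
Import Order.TTheory GRing.Theory Num.Theory.
Local Open Scope ring_scope.

(* Degree 5 and net degree 3 leave every vertex four positive neighbours and
   one negative one, its mate, so A = P - N with N the permutation matrix of
   an involution. As a + b <> 2c, comparing A A^2 with A^2 A gives PN = NP.
   The unbalanced triangle makes b >= 1, and counting common positive
   neighbours then shows that positive neighbourhoods are closed under taking
   mates: each one is the union of two pairs {x, mate x}. Contracting the
   pairs leaves a connected 2-regular graph, a cycle C_m, of which the signed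
   graph is the doubling S^1_2m. Non-completeness forces a = -2, so m > 3,
   and the value of c on a pair of vertices at distance two closes the cycle
   after at most five steps. *)

Definition ind (b : bool) : int := if b then 1 else 0.

Lemma ind_and b1 b2 : ind b1 * ind b2 = ind (b1 && b2).
Proof. by case: b1; case: b2; rewrite /= ?mulr1 ?mulr0. Qed.

Section FiniteSums.
Variable T : finType.

Lemma sum_ind (p : pred T) : \sum_z ind (p z) = (#|[set z | p z]|)%:Z.
Proof.
rewrite -sum1dep_card (big_morph Posz PoszD (erefl _)) [RHS]big_mkcond.
by apply: eq_bigr => z _; case: (p z).
Qed.

Lemma sum_mul_ind_eq (F : T -> int) w : \sum_z F z * ind (z == w) = F w.
Proof.
rewrite (bigD1 w) //= eqxx mulr1 big1 ?addr0 // => z /negbTE ->.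
by rewrite mulr0.
Qed.

Lemma sum_ind_eq_mul (F : T -> int) w : \sum_z ind (z == w) * F z = F w.
Proof. by rewrite -[RHS](sum_mul_ind_eq F w); apply: eq_bigr => z _; rewrite mulrC. Qed.

Lemma uniq_size_le_card (S : {set T}) (s : seq T) :
  uniq s -> all (mem S) s -> (size s <= #|S|)%N.
Proof.
move=> /card_uniqP <- /allP sS.
by apply: subset_leq_card; apply/subsetP => z /sS.
Qed.

Lemma card_add_size_le (S Q : {set T}) (s : seq T) :
  uniq s -> all (mem S) s -> {subset Q <= [predD S & s]} ->
  (#|Q| + size s <= #|S|)%N.
Proof.
move=> /card_uniqP <- /allP sS QS; rewrite -cardUI.
have -> : #|[predI Q & s]| = 0%N.
  by apply: eq_card0 => z; rewrite !inE; apply/andP => -[/QS]; rewrite !inE => /andP[/negP].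
rewrite addn0; apply: subset_leq_card; apply/subsetP => z.
by rewrite !inE => /orP[/QS /andP[]|/sS].
Qed.

Lemma sq_assoc (A : T -> T -> int) x y :
  \sum_z A x z * sq A z y = \sum_z sq A x z * A z y.
Proof.
rewrite /sq; transitivity (\sum_z \sum_w A x z * A z w * A w y).
  by apply: eq_bigr => z _; rewrite big_distrr; apply: eq_bigr => w _ /=; rewrite mulrA.
by rewrite exchange_big; apply: eq_bigr => w _; rewrite big_distrl.
Qed.

End FiniteSums.

Lemma ordS_ordS_neq m (i : 'I_m) : (2 < m)%N -> ordS (ordS i) != i.
Proof.
move=> m_gt2; rewrite -val_eqE /= -addn1 modnDml addn1.
have i_lt := ltn_ord i.
have [lt_i2m | le_mi2] := ltnP i.+2 m; first by rewrite modn_small // gtn_eqF.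
have -> : i.+2 = (i.+2 - m + m)%N by lia.
by rewrite modnDr modn_small; lia.
Qed.

Lemma S1_cycle_adj m (i j : 'I_m) :
  ((i.+1 %% m == j) || (j.+1 %% m == i))%N = (j == ordS i) || (j == ord_pred i).
Proof.
congr (_ || _); first by rewrite eq_sym -val_eqE.
apply/eqP/eqP => [ji | ->]; last by have /(congr1 val) := ord_predK i.
by apply: ordS_inj; rewrite ord_predK; apply: val_inj.
Qed.

Lemma connect_closed (T : finType) (e : rel T) (S : pred T) x y :
  (forall s t, S s -> e s t -> S t) -> S x -> connect e x y -> S y.
Proof.
move=> Scl Sx /connectP[p + ->]; elim: p x Sx => [|z p IHp] x Sx //= /andP[exz].
exact/IHp/(Scl x).
Qed.

Lemma noncomplete_distance2 (T : finType) (A : T -> T -> int) :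
  ~ complete A -> connected A ->
  exists p q z, [/\ p != q, A p q = 0, A p z != 0 & A z q != 0].
Proof.
move=> Anc Acon.
have [x [y [xy Axy]]] : exists x y, x != y /\ A x y = 0.
  case: (boolP [exists x, exists y, (x != y) && (A x y == 0)]).
    by move=> /existsP[x /existsP[y /andP[xy /eqP Axy]]]; exists x, y.
  move=> all_adj; exfalso; apply: Anc => x y xy; apply/eqP => Axy; move/negP: all_adj; apply.
  by apply/existsP; exists x; apply/existsP; exists y; rewrite xy Axy.
case: (boolP [exists q, exists z, [&& x != q, A x q == 0, A x z != 0 & A z q != 0]]).
  by move=> /existsP[q /existsP[z /and4P[xq /eqP Axq Axz Azq]]]; exists x, q, z.
move=> no_dist2; exfalso.
pose ball := [pred t | (t == x) || (A x t != 0)].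
suff : ball y by rewrite inE Axy eqxx orbF eq_sym (negbTE xy).
apply: (connect_closed _ _ (Acon x y)); last by rewrite inE eqxx.
move=> s t; rewrite /adjacent !inE => /orP[/eqP -> -> | Axs Ast]; first by rewrite orbT.
case: (eqVneq t x) => //= tx; apply/negP => /eqP Axt; move/negP: no_dist2; apply.
by apply/existsP; exists t; apply/existsP; exists s; rewrite eq_sym tx Axt Axs Ast.
Qed.

Section SignedGraph.
Variables (T : finType) (A : T -> T -> int).
Hypothesis A_loopless : forall x, A x x = 0.
Hypothesis A_sym : forall x y, A x y = A y x.
Hypothesis A_sign : forall x y, A x y = 0 \/ A x y = 1 \/ A x y = -1.

Definition pos x y : bool := A x y == 1.

Lemma pos_sym x y : pos x y = pos y x.
Proof. by rewrite /pos A_sym. Qed.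

Lemma pos_irrefl x : pos x x = false.
Proof. by rewrite /pos A_loopless. Qed.

Lemma pos_neq x y : pos x y -> x != y.
Proof. by apply: contraTneq => ->; rewrite pos_irrefl. Qed.

Lemma deg_split x : deg A x = (dplus A x + dminus A x)%N.
Proof.
rewrite /deg /dplus /dminus -(cardsID [set y | A x y == 1] [set y | A x y != 0]).
congr (_ + _)%N; apply: eq_card => y; rewrite !inE;
  by case: (A_sign x y) => [->|[->|->]].
Qed.

Lemma sum_row x : \sum_z A x z = net_deg A x.
Proof.
transitivity (\sum_z (ind (A x z == 1) - ind (A x z == -1))).
  by apply: eq_bigr => z _; case: (A_sign x z) => [->|[->|->]].
by rewrite sumrB !sum_ind.
Qed.

Section OneNegativeNeighbour.
Hypothesis dminus1 : forall x, dminus A x = 1%N.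

Definition mate x := odflt x [pick y | A x y == -1].

Lemma A_mate x : A x (mate x) = -1.
Proof.
rewrite /mate; case: pickP => [y /eqP // | none].
have := dminus1 x; rewrite /dminus.
suff -> : [set y | A x y == -1] = set0 by rewrite cards0.
by apply/setP => y; rewrite inE none in_set0.
Qed.

Lemma A_negE x y : (A x y == -1) = (y == mate x).
Proof.
apply/idP/eqP => [xy | ->]; last by rewrite A_mate.
have /eqP/cards1P[z Nx] := dminus1 x.
have : y \in [set y | A x y == -1] by rewrite inE.
have : mate x \in [set y | A x y == -1] by rewrite inE A_mate.
by rewrite Nx !inE => /eqP -> /eqP ->.
Qed.

Lemma mateK : involutive mate.
Proof. by move=> x; apply/esym/eqP; rewrite -A_negE A_sym A_mate. Qed.

Lemma mate_inj : injective mate.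
Proof. exact: inv_inj mateK. Qed.

Lemma mate_neq x : mate x != x.
Proof. by apply/eqP => mx; have := A_mate x; rewrite mx A_loopless. Qed.

Lemma eq_mate y z : (y == mate z) = (z == mate y).
Proof. by apply/eqP/eqP => ->; rewrite mateK. Qed.

Lemma A_pos_mate x y : A x y = ind (pos x y) - ind (y == mate x).
Proof. by rewrite -A_negE /pos; case: (A_sign x y) => [->|[->|->]]. Qed.

Lemma unbalanced_pos_mate :
  has_unbalanced_triangle A -> exists v w, pos v w && pos w (mate v).
Proof.
case=> x [y [z [[xy yz xz] [Axy Ayz Axz]]]]; rewrite (A_sym z x).
have neg_mate u v : A u v = -1 -> v = mate u by move/eqP; rewrite A_negE => /eqP.
case: (A_sign x y) => [E1|[E1|E1]]; first by rewrite E1 eqxx in Axy.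
all: case: (A_sign y z) => [E2|[E2|E2]]; first by rewrite E2 eqxx in Ayz.
all: case: (A_sign x z) => [E3|[E3|E3]]; first by rewrite E3 eqxx in Axz.
all: rewrite E1 E2 E3 //= => _.
- by exists x, y; rewrite /pos E1 -(neg_mate _ _ E3) E2.
- by exists y, x; rewrite /pos A_sym E1 -(neg_mate _ _ E2) E3.
- by exists x, z; rewrite /pos E3 -(neg_mate _ _ E1) A_sym E2.
- by move: xz; rewrite (neg_mate _ _ E2) (neg_mate _ _ E1) mateK eqxx.
Qed.

Definition common_pos x y : {set T} := [set z | pos x z && pos z y].

Lemma sum_pos_pos x y :
  \sum_z ind (pos x z) * ind (pos z y) = (#|common_pos x y|)%:Z.
Proof. by rewrite -sum_ind; apply: eq_bigr => z _; rewrite ind_and. Qed.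

Lemma sum_A_pos x y :
  \sum_z A x z * ind (pos z y) = (#|common_pos x y|)%:Z - ind (pos (mate x) y).
Proof.
under eq_bigr do rewrite A_pos_mate mulrBl.
by rewrite sumrB sum_pos_pos sum_ind_eq_mul.
Qed.

Lemma sum_pos_A x y :
  \sum_z ind (pos x z) * A z y = (#|common_pos x y|)%:Z - ind (pos x (mate y)).
Proof.
under eq_bigr do rewrite A_pos_mate eq_mate mulrBr.
by rewrite sumrB sum_pos_pos sum_mul_ind_eq.
Qed.

Lemma sq_offdiag x y : x != y ->
  sq A x y = (#|common_pos x y|)%:Z - ind (pos x (mate y)) - ind (pos (mate x) y).
Proof.
move=> xy; rewrite /sq.
transitivity (\sum_z (ind (pos x z) * ind (pos z y) - ind (pos x z) * ind (z == mate y)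
   - ind (z == mate x) * ind (pos z y) + ind (z == mate x) * ind (z == mate y))).
  by apply: eq_bigr => z _; rewrite (A_pos_mate x z) (A_pos_mate z y) (eq_mate y z); ring.
rewrite !big_split /= !sumrN sum_pos_pos sum_mul_ind_eq !sum_ind_eq_mul.
by rewrite (inj_eq mate_inj) (negbTE xy) /= addr0.
Qed.

Section SRSGCommutation.
Variables (rho : int) (r : nat) (a b c : int).
Hypothesis A_net : net_regular A rho.
Hypothesis A_srsg : srsg_cond A r a b c.
Hypothesis abc_gen : a + b != 2 * c.

Lemma sq_srsg x z : sq A x z =
  c + (r%:Z - c) * ind (x == z) + (a - c) * ind (pos x z) + (b - c) * ind (z == mate x).
Proof.
have [Ar [Aa [Ab Ac]]] := A_srsg.
case: (eqVneq x z) => [<- | xz].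
  by rewrite Ar pos_irrefl eq_sym (negbTE (mate_neq x)) /=; ring.
rewrite /= -A_negE /pos; case: (A_sign x z) => [Axz|[Axz|Axz]]; rewrite Axz /=.
- by rewrite Ac //; ring.
- by rewrite Aa //; ring.
- by rewrite Ab //; ring.
Qed.

(* Comparing the two sides of A * A^2 = A^2 * A at (x, y) leaves
   (a + b - 2c) ([pos x (mate y)] - [pos (mate x) y]) = 0. *)
Lemma pos_mate_comm x y : pos x (mate y) = pos (mate x) y.
Proof.
set u := ind (pos x (mate y)); set v := ind (pos (mate x) y).
have row_sum z : \sum_w A z w = rho by rewrite sum_row A_net.
have lhs : \sum_z A x z * sq A z y = rho * c + (r%:Z - c) * A x y
    + (a - c) * ((#|common_pos x y|)%:Z - v) + (b - c) * (u - ind (x == y)).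
  transitivity (\sum_z (c * A x z + (r%:Z - c) * (A x z * ind (z == y))
      + (a - c) * (A x z * ind (pos z y)) + (b - c) * (A x z * ind (z == mate y)))).
    by apply: eq_bigr => z _; rewrite sq_srsg eq_mate; ring.
  rewrite !big_split /= -!mulr_sumr row_sum !sum_mul_ind_eq sum_A_pos (A_pos_mate x (mate y)).
  by rewrite (inj_eq mate_inj) (eq_sym y x) /u /v; ring.
have rhs : \sum_z sq A x z * A z y = rho * c + (r%:Z - c) * A x y
    + (a - c) * ((#|common_pos x y|)%:Z - u) + (b - c) * (v - ind (x == y)).
  transitivity (\sum_z (c * A z y + (r%:Z - c) * (ind (z == x) * A z y)
      + (a - c) * (ind (pos x z) * A z y) + (b - c) * (ind (z == mate x) * A z y))).
    by apply: eq_bigr => z _; rewrite sq_srsg (eq_sym x z); ring.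
  have col_sum : \sum_z A z y = rho.
    by rewrite -(row_sum y); apply: eq_bigr => z _; rewrite A_sym.
  rewrite !big_split /= -!mulr_sumr col_sum !sum_ind_eq_mul sum_pos_A (A_pos_mate (mate x) y).
  by rewrite mateK (eq_sym y x) /u /v; ring.
have : (a + b - 2 * c) * (u - v) = 0.
  by have := sq_assoc A x y; rewrite lhs rhs => /eqP; rewrite -subr_eq0 => /eqP <-; ring.
move/eqP; rewrite mulf_eq0 subr_eq0 (negbTE abc_gen) /= subr_eq0 /u /v.
by case: (pos x (mate y)); case: (pos (mate x) y).
Qed.

Lemma sq_offdiag_comm x y : x != y ->
  sq A x y = (#|common_pos x y|)%:Z - 2 * ind (pos x (mate y)).
Proof. by move=> xy; rewrite sq_offdiag // -pos_mate_comm; ring. Qed.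

Section PairClosure.
Hypothesis dplus4 : forall x, dplus A x = 4%N.
Hypothesis unbalanced : exists v w, pos v w && pos w (mate v).

Definition pos_nbhd x : {set T} := [set y | pos x y].

Lemma card_pos_nbhd x : #|pos_nbhd x| = 4%N.
Proof. exact: dplus4. Qed.

Lemma sq_mate u : sq A u (mate u) = (#|common_pos u (mate u)|)%:Z.
Proof.
by rewrite sq_offdiag_comm 1?eq_sym ?mate_neq // mateK pos_irrefl mulr0 subr0.
Qed.

Lemma common_pos_mate_gt0 u : (0 < #|common_pos u (mate u)|)%N.
Proof.
have [_ [_ [Ab _]]] := A_srsg.
case: unbalanced => v [w /andP[Pvw Pwv']].
have : (#|common_pos u (mate u)|)%:Z = #|common_pos v (mate v)|.
  by rewrite -!sq_mate !Ab ?A_mate.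
move/eqP; rewrite eqz_nat => /eqP ->; apply/card_gt0P; exists w.
by rewrite inE Pvw.
Qed.

(* With w a common positive neighbour of u and mate u, the values of a on the
   positive edges uy and uw give #|common_pos u w| = #|common_pos u y| + 2,
   too many for the positive neighbours of u other than w and mate w. *)
Lemma pos_mate_of_pos u y : pos u y -> pos u (mate y).
Proof.
have [_ [Aa _]] := A_srsg.
move=> Puy; apply/negPn/negP => nPuy'.
have /card_gt0P[w] := common_pos_mate_gt0 u; rewrite inE => /andP[Puw Pwu'].
have Puw' : pos u (mate w) by rewrite pos_sym -pos_mate_comm.
have a_y : a = (#|common_pos u y|)%:Z.
  by rewrite -(Aa u y (eqP Puy)) sq_offdiag_comm ?pos_neq // (negbTE nPuy') mulr0 subr0.
have a_w : a = (#|common_pos u w|)%:Z - 2.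
  by rewrite -(Aa u w (eqP Puw)) sq_offdiag_comm ?pos_neq // Puw' mulr1.
have yw : y != w by apply: contraNneq nPuy' => ->.
have yw' : y != mate w by apply: contraNneq nPuy' => ->; rewrite mateK.
have ww' : w != mate w by rewrite eq_sym mate_neq.
have CPw_out z : z \in common_pos u w -> [&& pos u z, z != w & z != mate w].
  rewrite inE => /andP[-> Pzw] /=; apply/andP; split.
    by apply: contraTneq Pzw => ->; rewrite pos_irrefl.
  by apply: contraTneq Pzw => ->; rewrite /pos A_sym A_mate.
case: (boolP (pos y w)) => Pyw.
- have : (0 < #|common_pos u y|)%N by apply/card_gt0P; exists w; rewrite inE Puw pos_sym Pyw.
  have : (#|common_pos u w| + size [:: w; mate w] <= #|pos_nbhd u|)%N.
    apply: card_add_size_le; first by rewrite /= inE andbT.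
      by rewrite /= !inE Puw Puw'.
    by move=> z /CPw_out /and3P[Puz zw zw']; rewrite !inE negb_or zw zw' Puz.
  by rewrite card_pos_nbhd /=; lia.
- have : (#|common_pos u w| + size [:: w; mate w; y] <= #|pos_nbhd u|)%N.
    apply: card_add_size_le; first by rewrite /= !inE negb_or ww' !(eq_sym _ y) yw yw'.
      by rewrite /= !inE Puw Puw' Puy.
    move=> z Hz; have /and3P[Puz zw zw'] := CPw_out z Hz.
    have zy : z != y by apply: contraNneq Pyw => <-; move: Hz; rewrite inE => /andP[].
    by rewrite !inE !negb_or zw zw' zy Puz.
  by rewrite card_pos_nbhd /=; lia.
Qed.

Lemma pos_mateR u y : pos u (mate y) = pos u y.
Proof. by apply/idP/idP => /pos_mate_of_pos //; rewrite mateK. Qed.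

Lemma pos_mateL u y : pos (mate u) y = pos u y.
Proof. by rewrite -pos_mate_comm pos_mateR. Qed.

Lemma sq_offdiag_pos x y : x != y ->
  sq A x y = (#|common_pos x y|)%:Z - 2 * ind (pos x y).
Proof. by move=> xy; rewrite sq_offdiag_comm // pos_mateR. Qed.

Definition same_pair s t : bool := (t == s) || (t == mate s).

Lemma same_pair_refl s : same_pair s s.
Proof. by rewrite /same_pair eqxx. Qed.

Lemma same_pair_mate s : same_pair s (mate s).
Proof. by rewrite /same_pair eqxx orbT. Qed.

Lemma same_pair_sym s t : same_pair s t = same_pair t s.
Proof. by rewrite /same_pair eq_sym eq_mate. Qed.

Lemma same_pair_trans t s w : same_pair s t -> same_pair t w -> same_pair s w.
Proof.
by move=> /orP[/eqP -> | /eqP ->] /orP[/eqP -> | /eqP ->];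
  rewrite ?mateK ?same_pair_refl ?same_pair_mate // same_pair_sym same_pair_mate.
Qed.

Lemma pos_same_pairR q s t : same_pair s t -> pos q t = pos q s.
Proof. by move=> /orP[/eqP -> | /eqP ->]; rewrite ?pos_mateR. Qed.

Lemma pos_same_pairL q s t : same_pair s t -> pos t q = pos s q.
Proof. by move=> /orP[/eqP -> | /eqP ->]; rewrite ?pos_mateL. Qed.

Lemma diff_pair_of_pos q s t : pos q s -> ~~ pos q t -> ~~ same_pair s t.
Proof. by move=> Pqs; apply: contra => /(pos_same_pairR q) ->. Qed.

Lemma pos_diff_pair s t : pos s t -> ~~ same_pair s t.
Proof. by move=> Pst; apply: (@diff_pair_of_pos t); rewrite ?pos_irrefl // pos_sym. Qed.

Lemma A_eq0_of_diff_pair x y : ~~ pos x y -> ~~ same_pair x y -> A x y = 0.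
Proof.
rewrite /pos /same_pair negb_or -A_negE => nPxy /andP[_ nNxy].
by case: (A_sign x y) => [// | [Axy | Axy]]; rewrite Axy ?eqxx in nPxy nNxy.
Qed.

Lemma pos_other_pair x s : exists2 t, pos x t & ~~ same_pair s t.
Proof.
case: (boolP [exists t, pos x t && (t \notin [:: s; mate s])]).
  by move=> /existsP[t /andP[Pxt ts]]; exists t; rewrite // /same_pair; move: ts; rewrite !inE.
move=> none.
have : (#|pos_nbhd x| <= size [:: s; mate s])%N.
  apply: leq_trans (card_size _); apply: subset_leq_card; apply/subsetP => z.
  rewrite inE => Pxz; apply: contraR none => zs; apply/existsP; exists z.
  by rewrite Pxz.
by rewrite card_pos_nbhd.
Qed.

(* The positive neighbourhood of [x] is a union of pairs and has four vertices,
   so it is made of exactly two pairs. *)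
Lemma pos_nbhd_two_pairs x s t u :
  pos x s -> pos x t -> ~~ same_pair s t -> pos x u -> same_pair s u || same_pair t u.
Proof.
move=> Pxs Pxt st Pxu; apply/negPn/negP; rewrite negb_or => /andP[su tu].
have : (size [:: s; mate s; t; mate t; u] <= #|pos_nbhd x|)%N.
  apply: uniq_size_le_card; last by rewrite /= !inE !pos_mateR Pxs Pxt Pxu.
  move: st su tu; rewrite /same_pair !negb_or => /andP[ts ts'] /andP[us us'] /andP[ut ut'].
  rewrite /= !inE !negb_or (eq_sym s t) ts (eq_mate s t) ts' (eq_sym s u) us.
  rewrite (eq_sym (mate s) t) ts' (inj_eq mate_inj) (eq_sym s t) ts (eq_sym (mate s) u) us'.
  rewrite (eq_sym t u) ut (eq_sym (mate t) u) ut' eq_sym (mate_neq s) eq_sym (mate_neq t).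
  by [].
by rewrite card_pos_nbhd.
Qed.

Lemma cycle_iso m (X : 'I_m -> T) : (2 < m)%N -> connected A ->
  (forall i j, i != j -> ~~ same_pair (X i) (X j)) ->
  (forall i, pos (X i) (X (ordS i))) -> sg_iso A (@S1 m).
Proof.
move=> m_gt2 Acon Xpairs Xpos.
have Xpos' i : pos (X i) (X (ord_pred i)) by have := Xpos (ord_pred i); rewrite ord_predK pos_sym.
have Xnbhd i t : pos (X i) t -> same_pair (X (ordS i)) t || same_pair (X (ord_pred i)) t.
  apply: pos_nbhd_two_pairs (Xpos i) (Xpos' i) _; apply: Xpairs.
  by rewrite -(inj_eq (@ordS_inj m)) ord_predK ordS_ordS_neq.
have posX i j : i != j -> pos (X i) (X j) = (j == ordS i) || (j == ord_pred i).
  move=> ij; apply/idP/idP => [Pij | /orP[] /eqP ->]; rewrite ?Xpos ?Xpos' //.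
  case: (eqVneq j (ordS i)) => //= jS; case: (eqVneq j (ord_pred i)) => //= jP.
  move: (Xnbhd i _ Pij); rewrite same_pair_sym (negbTE (Xpairs _ _ jS)).
  by rewrite same_pair_sym (negbTE (Xpairs _ _ jP)).
pose g p := if p.2 then mate (X p.1) else X p.1.
have g_pair p : same_pair (X p.1) (g p).
  by rewrite /g; case: p.2; rewrite ?same_pair_mate ?same_pair_refl.
have gA p q : A (g p) (g q) = S1 p q.
  case: p q => [i e] [j e']; rewrite /S1 /=; case: (eqVneq i j) => [<- | ij].
    by case: e; case: e'; rewrite /g /= ?A_loopless ?A_mate // A_sym A_mate.
  rewrite S1_cycle_adj -(posX i j ij) -(pos_same_pairL _ (g_pair (i, e))).
  rewrite -(pos_same_pairR _ (g_pair (j, e'))) /pos /=.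
  case: (A_sign (g (i, e)) (g (j, e'))) => [->|[->|/eqP]] //.
  rewrite A_negE => /eqP g_mate; case/negP: (Xpairs i j ij).
  apply: (same_pair_trans (g_pair (i, e))); apply: (same_pair_trans (same_pair_mate _)).
  by rewrite -g_mate same_pair_sym (g_pair (j, e')).
have g_inj : injective g.
  move=> [i e] [j e'] gij; case: (eqVneq i j) => [ij | ij].
    move: gij; rewrite -ij /g /=; case: e; case: e' => //= E.
      by have := mate_neq (X i); rewrite E eqxx.
    by have := mate_neq (X i); rewrite -E eqxx.
  case/negP: (Xpairs i j ij); apply: (same_pair_trans (g_pair (i, e))).
  by rewrite gij same_pair_sym (g_pair (j, e')).
have g_surj t : exists p, g p = t.
  pose covered := [pred t | [exists i, same_pair (X i) t]].
  pose i0 : 'I_m := Ordinal (ltn_trans (isT : (0 < 2)%N) m_gt2).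
  have : covered t.
    apply: (connect_closed _ _ (Acon (X i0) t)); last first.
      by apply/existsP; exists i0; apply: same_pair_refl.
    move=> s u /existsP[i Xis]; rewrite /adjacent.
    case: (A_sign s u) => [-> | [Asu _ | /eqP]]; rewrite ?eqxx //.
      have Piu : pos (X i) u by rewrite -(pos_same_pairL _ Xis) /pos Asu.
      by apply/existsP; case/orP: (Xnbhd i u Piu) => Xu; eexists; exact: Xu.
    rewrite A_negE => /eqP -> _; apply/existsP; exists i.
    exact: same_pair_trans Xis (same_pair_mate s).
  case/existsP => i /orP[/eqP -> | /eqP ->]; first by exists (i, false).
  by exists (i, true).
have [h gK hK] : bijective g.
  apply: (inj_card_bij g_inj); rewrite -(card_codom g_inj).
  apply/subset_leq_card/subsetP => t _; have [p <-] := g_surj t; exact: codom_f.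
by exists h; split; [exists g | move=> x y; rewrite -gA !hK].
Qed.

Lemma cycle_pairs_distinct m (X : 'I_m -> T) :
  (forall i j : 'I_m, i != j ->
     [|| j == ordS i, i == ordS j, j == ordS (ordS i) | i == ordS (ordS j)]) ->
  (forall i, pos (X i) (X (ordS i))) ->
  (forall i, ~~ same_pair (X i) (X (ordS (ordS i)))) ->
  forall i j, i != j -> ~~ same_pair (X i) (X j).
Proof.
move=> near Xpos Xpairs i j /near /or4P[] /eqP ->;
  rewrite ?(same_pair_sym (X (ordS _))); first [exact: pos_diff_pair | exact: Xpairs].
Qed.

Section Connected.
Hypothesis A_con : connected A.
Hypothesis A_noncomplete : ~ complete A.

Lemma pos_middle p q z : p != q -> A p q = 0 -> A p z != 0 -> A z q != 0 -> pos z p.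
Proof.
move=> pq Apq Apz Azq; rewrite A_sym in Apz.
case: (A_sign z p) => [Azp | [/eqP // | /eqP]]; first by rewrite Azp eqxx in Apz.
rewrite A_negE => /eqP pz.
case: (A_sign z q) => [Azq0 | [Azq1 | /eqP]]; first by rewrite Azq0 eqxx in Azq.
  by have := pos_mateL z q; rewrite -pz /pos Apq Azq1.
by rewrite A_negE -pz => /eqP qp; rewrite qp eqxx in pq.
Qed.

Lemma a_eq_neg2 : a = -2.
Proof.
have [_ [Aa _]] := A_srsg.
have [p [q [z [pq Apq Apz Azq]]]] := noncomplete_distance2 A_noncomplete A_con.
have Pzp := pos_middle pq Apq Apz Azq.
have Pzq : pos z q.
  by apply: (@pos_middle q p); rewrite 1?A_sym // eq_sym.
have pq_pairs : ~~ same_pair p q.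
  rewrite /same_pair negb_or eq_sym pq /=.
  by apply/eqP => qp; move: Apq; rewrite qp A_mate.
have CP0 : common_pos z p = set0.
  apply/setP => t; rewrite !inE; apply/andP => -[Pzt Ptp].
  case/orP: (pos_nbhd_two_pairs Pzp Pzq pq_pairs Pzt) => /(pos_same_pairL p).
    by rewrite Ptp pos_irrefl.
  by rewrite Ptp /pos A_sym Apq.
by rewrite -(Aa z p (eqP Pzp)) sq_offdiag_pos ?pos_neq // Pzp CP0 cards0.
Qed.

Lemma no_pos_triangle x y z : pos x y -> pos x z -> pos z y -> False.
Proof.
have [_ [Aa _]] := A_srsg.
move=> Pxy Pxz Pzy; have := Aa x y (eqP Pxy).
rewrite a_eq_neg2 sq_offdiag_pos ?pos_neq // Pxy mulr1 => CP.
have /card0_eq /(_ z) : #|common_pos x y| = 0%N by lia.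
by rewrite !inE Pxz Pzy.
Qed.

Section ChordlessPath.
Variables x0 x1 x2 x4 : T.
Hypotheses (P01 : pos x0 x1) (P04 : pos x0 x4) (P12 : pos x1 x2).
Hypotheses (S14 : ~~ same_pair x1 x4) (S02 : ~~ same_pair x0 x2).

Lemma square_case : pos x4 x2 -> sg_iso A (@S1 4).
Proof.
move=> P42; pose X i := nth x0 [:: x0; x1; x2; x4] (i : 'I_4).
have Xpos i : pos (X i) (X (ordS i)).
  by case: i => [[|[|[|[|i]]]] ?] //=; rewrite /X /= // pos_sym.
apply: (@cycle_iso 4 X) => //; apply: cycle_pairs_distinct => //.
- by case=> [[|[|[|[|i]]]] ?] [[|[|[|[|j]]]] ?].
- by case=> [[|[|[|[|i]]]] ?] //=; rewrite /X /= // same_pair_sym.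
Qed.

Lemma pentagon_case : ~~ pos x4 x2 -> sg_iso A (@S1 5).
Proof.
have [_ [_ [_ Ac]]] := A_srsg.
move=> N42; have [x3 P43 S03] := pos_other_pair x4 x0.
have N14 : ~~ pos x1 x4 by apply/negP => P14; apply: (no_pos_triangle P01 P04); rewrite pos_sym.
have N02 : ~~ pos x0 x2.
  by apply/negP => P02; apply: (no_pos_triangle (y := x0) _ P12); rewrite pos_sym.
have N03 : ~~ pos x0 x3.
  by apply/negP => P03; apply: (no_pos_triangle (y := x0) _ P43); rewrite pos_sym.
have P10 : pos x1 x0 by rewrite pos_sym.
have c2 : c = 2.
  have CP02 : common_pos x0 x2 = [set x1; mate x1].
    apply/setP => t; rewrite !inE; apply/andP/idP => [[P0t Pt2] | /orP[] /eqP ->].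
    - case/orP: (pos_nbhd_two_pairs P01 P04 S14 P0t) => [/orP[] | /(pos_same_pairL x2)].
      + by move/eqP ->; rewrite eqxx.
      + by move/eqP ->; rewrite eqxx orbT.
      + by rewrite Pt2 (negbTE N42).
    - by rewrite P01.
    - by rewrite pos_mateR pos_mateL P01.
  have x02 : x0 != x2 by apply: contraNneq S02 => ->; rewrite same_pair_refl.
  rewrite -(Ac x0 x2 x02 (A_eq0_of_diff_pair N02 S02)) sq_offdiag_pos // (negbTE N02).
  by rewrite CP02 cards2 eq_sym mate_neq.
have N13 : ~~ pos x1 x3.
  apply/negP => P13.
  case/orP: (pos_nbhd_two_pairs P10 P12 S02 P13) => [S | /(pos_same_pairR x4)].
    by rewrite S in S03.
  by rewrite P43 (negbTE N42).
have S13 : ~~ same_pair x1 x3 := diff_pair_of_pos P01 N03.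
have P23 : pos x2 x3.
  have x13 : x1 != x3 by apply: contraNneq S13 => ->; rewrite same_pair_refl.
  have := Ac x1 x3 x13 (A_eq0_of_diff_pair N13 S13).
  rewrite sq_offdiag_pos // (negbTE N13) c2 mulr0 subr0 => CP13.
  have /card_gt0P[t] : (0 < #|common_pos x1 x3|)%N.
    by move: CP13; case: #|_|.
  rewrite inE => /andP[P1t Pt3].
  case/orP: (pos_nbhd_two_pairs P10 P12 S02 P1t) => /(pos_same_pairL x3).
    by rewrite Pt3 (negbTE N03).
  by rewrite Pt3.
have S24 : ~~ same_pair x2 x4 := diff_pair_of_pos P12 N14.
pose X i := nth x0 [:: x0; x1; x2; x3; x4] (i : 'I_5).
have Xpos i : pos (X i) (X (ordS i)).
  by case: i => [[|[|[|[|[|i]]]]] ?] //=; rewrite /X /= // pos_sym.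
apply: (@cycle_iso 5 X) => //; apply: cycle_pairs_distinct => //.
- by case=> [[|[|[|[|[|i]]]]] ?] [[|[|[|[|[|j]]]]] ?].
- by case=> [[|[|[|[|[|i]]]]] ?] //=; rewrite /X /= // same_pair_sym.
Qed.

End ChordlessPath.

Lemma doubled_cycle_iso : sg_iso A (@S1 4) \/ sg_iso A (@S1 5).
Proof.
have [x0 _] := unbalanced.
have [x1 P01 _] := pos_other_pair x0 x0.
have [x4 P04 S14] := pos_other_pair x0 x1.
have [x2 P12 S02] := pos_other_pair x1 x0.
case: (boolP (pos x4 x2)) => [P42 | N42].
  by left; apply: (square_case P01 P04 P12 S14 S02).
by right; apply: (pentagon_case P01 P04 P12 S14 S02).
Qed.

End Connected.
End PairClosure.
End SRSGCommutation.
End OneNegativeNeighbour.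
End SignedGraph.

Definition S1_square m (c : int) (x y : 'I_m * bool) : int :=
  if x == y then 5 else if S1 x y == 1 then -2 else if S1 x y == -1 then 4 else c.

Lemma S1_srsg_params m n c : (forall x y, sq (@S1 m) x y = S1_square c x y) ->
  #|{: 'I_m * bool}| = n -> ~ complete (@S1 m) -> ~ edgeless (@S1 m) ->
  SRSG_params (@S1 m) n 5 (-2) 4 c.
Proof.
move=> S1_sq card_n S1_noncomplete S1_edges.
have S1_loopless x : S1 x x = 0 by rewrite /S1 !eqxx.
have S1_cond : srsg_cond (@S1 m) 5 (-2) 4 c.
  split; first by move=> x; rewrite S1_sq /S1_square eqxx.
  split; last split.
  - move=> x y S1xy; rewrite S1_sq /S1_square S1xy.
    by case: eqVneq => // xy; rewrite xy S1_loopless in S1xy.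
  - move=> x y S1xy; rewrite S1_sq /S1_square S1xy.
    by case: eqVneq => // xy; rewrite xy S1_loopless in S1xy.
  - by move=> x y xy S1xy; rewrite S1_sq /S1_square (negbTE xy) S1xy.
split=> //; split; first by case.
by split=> //; exists 5%N, (-2), 4, c.
Qed.

Lemma sq_S1 m (x y : 'I_m * bool) : sq (@S1 m) x y =
  \sum_(i < m) (S1 x (i, true) * S1 (i, true) y + S1 x (i, false) * S1 (i, false) y).
Proof.
rewrite /sq -(pair_big predT predT (fun i e => S1 x (i, e) * S1 (i, e) y)) /=.
by apply: eq_bigr => i _; rewrite big_bool.
Qed.

Lemma S1_4_params : SRSG_params (@S1 4) 8 5 (-2) 4 4.
Proof.
pose v (i : nat) (e : bool) (lt_i4 : (i < 4)%N) := (Ordinal lt_i4, e).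
apply: S1_srsg_params.
- move=> x y; rewrite sq_S1 !big_ord_recl big_ord0.
  by case: x => [[[|[|[|[|?]]]] ?] []] //; case: y => [[[|[|[|[|?]]]] ?] []] //; vm_compute.
- by rewrite card_prod card_ord card_bool.
- by move/(_ (v 0 false isT) (v 2 false isT) isT); vm_compute.
- by move/(_ (v 0 false isT) (v 0 true isT)); vm_compute.
Qed.

Lemma S1_5_params : SRSG_params (@S1 5) 10 5 (-2) 4 2.
Proof.
pose v (i : nat) (e : bool) (lt_i5 : (i < 5)%N) := (Ordinal lt_i5, e).
apply: S1_srsg_params.
- move=> x y; rewrite sq_S1 !big_ord_recl big_ord0.
  by case: x => [[[|[|[|[|[|?]]]]] ?] []] //; case: y => [[[|[|[|[|[|?]]]]] ?] []] //; vm_compute.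
- by rewrite card_prod card_ord card_bool.
- by move/(_ (v 0 false isT) (v 2 false isT) isT); vm_compute.
- by move/(_ (v 0 false isT) (v 0 true isT)); vm_compute.
Qed.

Theorem lemma3p1 (T : finType) (A : T -> T -> int) :
  signed_graph A ->
  SRSG A -> connected A -> ~ complete A ->
  regular A 5 -> net_regular A 3 ->
  inhomogeneous A ->
  (exists (r : nat) (a b c : int),
      srsg_cond A r a b c /\ (in_C1 a b c \/ in_C4 a b c \/ in_C5 a b c)) ->
  has_unbalanced_triangle A ->
  (sg_iso A (@S1 4) /\ SRSG_params (@S1 4) 8 5 (-2) 4 4) \/
  (sg_iso A (@S1 5) /\ SRSG_params (@S1 5) 10 5 (-2) 4 2).
Proof.
move=> [A0 [Asym Asign]] _ Acon Anc Adeg Anet _ [r [a [b [c [Asrsg Aclass]]]]] Atri.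
have abc_gen : a + b != 2 * c.
  case: Aclass => [[ab c0] | [[ab c0] | [ab [abc _]]]]; last by rewrite eq_sym.
    by apply: contra c0 => /eqP abc; apply/eqP; lia.
  by apply: contra ab => /eqP abc; apply/eqP; lia.
have deg_pm x : dplus A x = 4%N /\ dminus A x = 1%N.
  by have := Adeg x; have := Anet x; rewrite /net_deg deg_split //; lia.
have dminus1 x : dminus A x = 1%N by case: (deg_pm x).
have dplus4 x : dplus A x = 4%N by case: (deg_pm x).
have Aunbal := unbalanced_pos_mate Asym Asign dminus1 Atri.
have [iso4 | iso5] := doubled_cycle_iso A0 Asym Asign dminus1 Anet Asrsg abc_gen dplus4 Aunbal Acon Anc.
- by left; split=> //; apply: S1_4_params.
- by right; split=> //; apply: S1_5_params.
Qed.
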